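(* Let $r \geq 3$. If $\mathcal{F}$ is a $\{C_2, C_3, K_{2,3}\}$-free $r$-uniform $r$-partite hypergraph with $n$ vertices in each part, then \[ |E(\mathcal{F})| \leq \sqrt{\frac{2}{r-1}}\, n^{3/2} + n. \] Furthermore, for any $q$ that is a power of an odd prime, there is a $3$-uniform $3$-partite $\{C_2, C_3, K_{2,3}\}$-free hypergraph with $q^2$ vertices in each part and $q^2(q-1)$ edges.
   Context: Let $G$ be a multigraph and $\mathcal{F}$ a hypergraph. $\mathcal{F}$ is a Berge-$G$ if there is a bijection $f: E(G) \to E(\mathcal{F})$ with $e \subseteq f(e)$ for every $e \in E(G)$. For a family $\mathcal{G}$ of multigraphs, a hypergraph $\mathcal{H}$ is $\mathcal{G}$-free if for every $G \in \mathcal{G}$, $\mathcal{H}$ contains no subhypergraph isomorphic to a Berge-$G$. $C_2$ is the multigraph consisting of two vertices joined by two parallel edges (so $C_2$-free means linear: two distinct edges share at most one vertex), $C_3$ is the triangle, $K_{2,3}$ the complete bipartite graph with parts of sizes $2$ and $3$. An $r$-uniform hypergraph is $r$-partite if its vertex set is partitioned into $r$ parts such that each edge contains exactly one vertex from each part. *)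

From HB Require Import structures.
From mathcomp Require Import all_boot all_order all_algebra.
Set Implicit Arguments. Unset Strict Implicit. Unset Printing Implicit Defensive.
Import Order.TTheory GRing.Theory Num.Theory.

Definition uniform (V : finType) (r : nat) (E : {set {set V}}) : Prop :=
  forall e, e \in E -> #|e| = r.

Definition partite (V : finType) (r : nat) (part : V -> 'I_r) (n : nat)
    (E : {set {set V}}) : Prop :=
  (forall i : 'I_r, #|[set v | part v == i]| = n) /\
  (forall e, e \in E -> forall i : 'I_r, #|[set v in e | part v == i]| = 1).

(* A multigraph G with vertex type W and edge type EG; each edge g has the two
   endpoints (ends g).1 and (ends g).2.  E contains a Berge-G iff there are an
   injective vertex map phi and an injective (bijective onto its image) edge map
   f into E with phi(endpoints of g) contained in f g. *)
Definition berge_contains (W EG : finType) (ends : EG -> W * W)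
    (V : finType) (E : {set {set V}}) : Prop :=
  exists (phi : W -> V) (f : EG -> {set V}),
    injective phi /\ injective f /\
    forall g, [/\ f g \in E, phi (ends g).1 \in f g & phi (ends g).2 \in f g].

Definition C2_ends (g : 'I_2) : 'I_2 * 'I_2 := (ord0, ord_max).
Definition C3_ends (g : 'I_3) : 'I_3 * 'I_3 := (g, inord ((g + 1) %% 3)).
Definition K23_ends (g : 'I_2 * 'I_3) : ('I_2 + 'I_3) * ('I_2 + 'I_3) :=
  (inl g.1, inr g.2).

Definition C2_C3_K23_free (V : finType) (E : {set {set V}}) : Prop :=
  ~ berge_contains C2_ends E /\ ~ berge_contains C3_ends E /\
  ~ berge_contains K23_ends E.

From HB Require Import structures.
From mathcomp Require Import all_boot all_order all_algebra all_field.
From mathcomp Require Import zify ring lra.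
Import Order.TTheory GRing.Theory Num.Theory.
Set Implicit Arguments. Unset Strict Implicit. Unset Printing Implicit Defensive.

(* Fix a part V0.  By linearity the edges through a vertex x
   outside V0 meet V0 in distinct vertices, so x yields d(x)(d(x)-1) ordered
   pairs of distinct neighbours in V0.  A pair of vertices of V0 arises from at
   most two such x: three would span a Berge-K_{2,3}, whose six edges are
   distinct by linearity and the absence of Berge triangles.  Hence
   sum d(x)(d(x)-1) <= 2n(n-1), while sum d(x) = (r-1)|E| over the (r-1)n
   vertices outside V0, and Cauchy-Schwarz gives (r-1)|E|^2 <= 2n^3 + (r-1)n|E|.

   Over F_q the edge with parameters a in F^2 and t in F^x has
   the vertex a + k_i (t, t^2) in part i, where (k_0, k_1, k_2) = (0, 1, -1).
   Two vertices in different parts determine t and then a.  Around a triangle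
   the displacements k (t, t^2) sum to zero, which forces al be (t0 - t1)^2 = 0.
   Two vertices of one part have at most one common neighbour in each other
   part; two vertices of different parts have at most two in the third part,
   since those neighbours correspond to roots of a quadratic.  Oddness of q
   keeps the slopes 1 and -1 apart and allows halving. *)

Section BergeCopies.
Variables (V : finType) (E : {set {set V}}).

Lemma berge_contains_nth (W EG : finType) (ends : EG -> W * W)
    (x0 : V) (e0 : {set V}) (xs : seq V) (es : seq {set V})
    (cW : W -> 'I_(size xs)) (cE : EG -> 'I_(size es)) :
  injective cW -> uniq xs -> injective cE -> uniq es -> {subset es <= E} ->
  (forall g, nth x0 xs (cW (ends g).1) \in nth e0 es (cE g) /\
             nth x0 xs (cW (ends g).2) \in nth e0 es (cE g)) ->
  berge_contains ends E.
Proof.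
move=> cW_inj xs_uniq cE_inj es_uniq esE ends_in.
exists (fun w => nth x0 xs (cW w)), (fun g => nth e0 es (cE g)); split; [|split].
- by move=> w w' /eqP; rewrite nth_uniq // => /eqP/val_inj/cW_inj.
- by move=> g g' /eqP; rewrite nth_uniq // => /eqP/val_inj/cE_inj.
- by move=> g; have [? ?] := ends_in g; split=> //; apply/esE/mem_nth.
Qed.

Lemma berge_C2 u v e1 e2 : u != v -> e1 != e2 -> e1 \in E -> e2 \in E ->
  u \in e1 -> v \in e1 -> u \in e2 -> v \in e2 -> berge_contains C2_ends E.
Proof.
move=> uv e12 e1E e2E ue1 ve1 ue2 ve2.
apply: (@berge_contains_nth _ _ _ u e1 [:: u; v] [:: e1; e2] id id) => //.
- by rewrite /= inE uv.
- by rewrite /= inE e12.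
- by move=> e; rewrite !inE => /orP[] /eqP->.
- by case=> -[|[|]].
Qed.

Lemma berge_C3 a b c e0 e1 e2 : uniq [:: a; b; c] -> uniq [:: e0; e1; e2] ->
  e0 \in E -> e1 \in E -> e2 \in E ->
  a \in e0 -> b \in e0 -> b \in e1 -> c \in e1 -> c \in e2 -> a \in e2 ->
  berge_contains C3_ends E.
Proof.
move=> abc_uniq e_uniq e0E e1E e2E ae0 be0 be1 ce1 ce2 ae2.
apply: (@berge_contains_nth _ _ _ a e0 [:: a; b; c] [:: e0; e1; e2] id id) => //.
- by move=> e; rewrite !inE => /or3P[] /eqP->.
- by case=> -[|[|[|]]] // ?; rewrite /C3_ends /= inordK.
Qed.

(* Edge (i, j) of K_{2,3} gets code 3 i + j. *)
Definition K23_edge_code (g : 'I_2 * 'I_3) : 'I_6 :=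
  unsplit (if g.1 == ord0 then inl g.2 else inr g.2).

Lemma K23_edge_code_inj : injective K23_edge_code.
Proof.
move=> [[[|[|//]] ?] j] [[[|[|//]] ?] j'] /(can_inj (@unsplitK 3 3)) //= [->].
all: by congr pair; apply: val_inj.
Qed.

Lemma berge_K23 u w x1 x2 x3 a1 a2 a3 b1 b2 b3 :
  uniq [:: u; w; x1; x2; x3] -> uniq [:: a1; a2; a3; b1; b2; b3] ->
  all (mem E) [:: a1; a2; a3; b1; b2; b3] ->
  u \in a1 -> u \in a2 -> u \in a3 -> w \in b1 -> w \in b2 -> w \in b3 ->
  x1 \in a1 -> x2 \in a2 -> x3 \in a3 -> x1 \in b1 -> x2 \in b2 -> x3 \in b3 ->
  berge_contains K23_ends E.
Proof.
move=> x_uniq e_uniq /allP eE ua1 ua2 ua3 wb1 wb2 wb3 xa1 xa2 xa3 xb1 xb2 xb3.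
apply: (@berge_contains_nth _ _ _ u a1 [:: u; w; x1; x2; x3]
  [:: a1; a2; a3; b1; b2; b3] (@unsplit 2 3 : _ -> 'I_5) K23_edge_code) => //.
- exact: can_inj (@unsplitK 2 3).
- exact: K23_edge_code_inj.
- by case=> -[[|[|//]] ?] [[|[|[|//]]] ?].
Qed.

End BergeCopies.

Lemma berge_containsS (W EG : finType) (ends : EG -> W * W) (V : finType)
    (E E' : {set {set V}}) :
  E \subset E' -> berge_contains ends E -> berge_contains ends E'.
Proof.
move=> /subsetP sub [phi [f [phi_inj [f_inj f_ok]]]].
by exists phi, f; split=> //; split=> // g; have [/sub ? ? ?] := f_ok g.
Qed.

Section Relabel.
Variables (V V' : finType) (h : V -> V').
Hypothesis h_bij : bijective h.

Let h_inj : injective h := bij_inj h_bij.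

Definition relabel (E : {set {set V}}) : {set {set V'}} := [set h @: e | e : {set V} in E].

Lemma berge_contains_relabel (W EG : finType) (ends : EG -> W * W) (E : {set {set V}}) :
  berge_contains ends (relabel E) -> berge_contains ends E.
Proof.
have [h' hK h'K] := h_bij; have h'_inj := can_inj h'K.
case=> phi [f [phi_inj [f_inj f_ok]]].
exists (h' \o phi), (fun g => h' @: f g); split; [|split].
- by move=> w w' /h'_inj /phi_inj.
- by move=> g g' /(imset_inj h'_inj) /f_inj.
- move=> g; have [/imsetP[e eE fg] ? ?] := f_ok g.
  split; try exact: imset_f.
  by rewrite fg -imset_comp (eq_imset _ hK) imset_id.
Qed.

Lemma C2_C3_K23_free_relabel (E : {set {set V}}) :
  C2_C3_K23_free E -> C2_C3_K23_free (relabel E).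
Proof. by case=> [n2 [n3 nk]]; split; [|split] => /berge_contains_relabel. Qed.

Lemma uniform_relabel r (E : {set {set V}}) : uniform r E -> uniform r (relabel E).
Proof. by move=> unif _ /imsetP[e eE ->]; rewrite card_imset // unif. Qed.

Lemma partite_relabel r (part : V -> 'I_r) (part' : V' -> 'I_r) n (E : {set {set V}}) :
  (forall v, part' (h v) = part v) -> partite part n E -> partite part' n (relabel E).
Proof.
have [h' _ h'K] := h_bij.
move=> part_h [card_part card_edge_part]; split=> [i | _ /imsetP[e eE ->] i].
  rewrite -(card_part i) -(card_imset _ h_inj); apply: eq_card => v'.
  by rewrite -[v']h'K !inE mem_imset // inE part_h.
rewrite -(card_edge_part e eE i) -(card_imset _ h_inj); apply: eq_card => v'.
by rewrite -[v']h'K !inE !mem_imset // inE part_h.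
Qed.

Lemma card_relabel (E : {set {set V}}) : #|relabel E| = #|E|.
Proof. exact/card_imset/imset_inj. Qed.

End Relabel.

Lemma card_set_sum (T : finType) (A : {pred T}) (P : pred T) :
  #|[set x in A | P x]| = \sum_(x in A) P x.
Proof. by rewrite -sum1dep_card big_mkcondr /=; apply: eq_bigr => x _; case: (P x). Qed.

Lemma card_distinct_pairs (T : finType) (A : {set T}) :
  #|[set p : T * T | [&& p.1 \in A, p.2 \in A & p.1 != p.2]]| = #|A| * (#|A| - 1).
Proof.
transitivity (\sum_(a in A) \sum_(b in A | b != a) 1).
  rewrite pair_big_dep /= sum1dep_card.
  by apply: eq_card => -[a b]; rewrite !inE eq_sym andbA.
rewrite -sum_nat_const; apply: eq_bigr => a aA.
rewrite sum1dep_card (cardsD1 a A) aA add1n subSS subn0.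
by apply: eq_card => b; rewrite !inE andbC.
Qed.

Lemma sum_sqr_le_card_mul (T : finType) (A : {pred T}) (f : T -> nat) :
  (\sum_(x in A) f x) ^ 2 <= #|A| * \sum_(x in A) f x ^ 2.
Proof.
have amgm a b : 2 * (a * b) <= a ^ 2 + b ^ 2.
  by have [+ _] := nat_AGM2 a b; rewrite sqrnD; lia.
have sum_sqr : \sum_(x in A) \sum_(y in A) (f x ^ 2 + f y ^ 2) =
               2 * (#|A| * \sum_(x in A) f x ^ 2).
  rewrite (eq_bigr (fun x => #|A| * f x ^ 2 + \sum_(y in A) f y ^ 2)).
    by rewrite big_split /= sum_nat_const -big_distrr /=; lia.
  by move=> x _; rewrite big_split /= sum_nat_const.
rewrite -(leq_pmul2l (isT : 0 < 2)) -sum_sqr -mulnn big_distrl big_distrr /=.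
apply: leq_sum => x _; rewrite big_distrr big_distrr /=.
by apply: leq_sum => y _; apply: amgm.
Qed.

Section UpperBound.
Variables (r n : nat) (V : finType) (part : V -> 'I_r) (E : {set {set V}}).
Hypotheses (E_uniform : uniform r E) (E_partite : partite part n E)
           (E_free : C2_C3_K23_free E).

Lemma edge_part_inj e u w : e \in E -> u \in e -> w \in e -> part u = part w -> u = w.
Proof.
move=> eE ue we puw; have /eqP/cards1P[x ex] := E_partite.2 e eE (part u).
have : u \in [set v in e | part v == part u] by rewrite inE ue eqxx.
have : w \in [set v in e | part v == part u] by rewrite inE we puw eqxx.
by rewrite ex !inE => /eqP-> /eqP->.
Qed.

Lemma free_linear u v e1 e2 : u != v -> e1 \in E -> e2 \in E ->
  u \in e1 -> v \in e1 -> u \in e2 -> v \in e2 -> e1 = e2.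
Proof.
move=> uv e1E e2E ue1 ve1 ue2 ve2; apply/eqP/negPn/negP => e12.
by case: E_free => + _; apply; apply: (berge_C2 uv e12).
Qed.

Lemma no_triangle_over_edge a b b' x x' w : a \in E -> b \in E -> b' \in E ->
  x != x' -> x \in a -> x' \in a -> w \notin a ->
  x \in b -> w \in b -> x' \in b' -> w \in b' -> False.
Proof.
move=> aE bE b'E xx' xa x'a wa xb wb x'b' wb'.
have neq_a (e : {set V}) : w \in e -> e != a by apply: contraTneq => ->.
have [xw x'w] : x != w /\ x' != w by split; apply: contraNneq wa => <-.
have bb' : b != b'.
  by apply: contraNneq (neq_a b wb) => eb; rewrite (free_linear xx' aE bE) // eb.
case: E_free => _ [+ _]; apply.
apply: (berge_C3 (a := x) (b := w) (c := x') (e0 := b) (e1 := b') (e2 := a)) => //.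
- by rewrite /= !inE !negb_or xw xx' eq_sym x'w.
- by rewrite /= !inE !negb_or bb' !neq_a.
Qed.

Lemma card_vertices : #|V| = r * n.
Proof.
rewrite -sum1_card (partition_big part xpredT) //= (eq_bigr (fun=> n)).
  by rewrite sum_nat_const card_ord.
by move=> i _; rewrite -(E_partite.1 i) -sum1dep_card.
Qed.

Section BasePart.
Variable i0 : 'I_r.

Definition base : {set V} := [set v | part v == i0].
Definition deg (x : V) := #|[set e in E | x \in e]|.
Definition base_nbr (x : V) := [set u in base | [exists e in E, (x \in e) && (u \in e)]].
Definition base_pairs := [set p : V * V | [&& p.1 \in base, p.2 \in base & p.1 != p.2]].

Lemma card_base : #|base| = n.
Proof. exact: E_partite.1. Qed.

Lemma card_outside_base : #|~: base| = (r - 1) * n.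
Proof. by rewrite cardsCs setCK card_vertices card_base mulnBl mul1n. Qed.

Lemma sum_deg_outside_base : \sum_(x in ~: base) deg x = (r - 1) * #|E|.
Proof.
rewrite /deg (eq_bigr (fun x => \sum_(e in E) (x \in e))); last first.
  by move=> x _; rewrite card_set_sum.
rewrite exchange_big /= mulnC -sum_nat_const; apply: eq_bigr => e eE.
rewrite -card_set_sum -(E_uniform eE) -(cardsID base e).
have -> : #|e :&: base| = 1.
  by rewrite -(E_partite.2 e eE i0); apply: eq_card => v; rewrite !inE.
by rewrite add1n subSS subn0; apply: eq_card => v; rewrite !inE andbC.
Qed.

(* The edge through x and u, unique by linearity; set0 if there is none. *)
Definition link (x u : V) : {set V} := odflt set0 [pick e in E | (x \in e) && (u \in e)].

Lemma linkP x u : u \in base_nbr x -> [/\ link x u \in E, x \in link x u & u \in link x u].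
Proof.
rewrite /link inE => /andP[_ /existsP[e /and3P[eE xe ue]]].
by case: pickP => [e' /and3P[] | /(_ e)] //; rewrite eE xe ue.
Qed.

Lemma edge_base_vertex e : e \in E -> exists2 u, u \in e & u \in base.
Proof.
move=> eE; have /eqP/cards1P[u eu] := E_partite.2 e eE i0.
have : u \in [set v in e | part v == i0] by rewrite eu set11.
by rewrite inE => /andP[ue ubase]; exists u; rewrite // inE.
Qed.

Lemma deg_le_card_base_nbr x : x \notin base -> deg x <= #|base_nbr x|.
Proof.
move=> xNbase; apply: leq_trans (leq_imset_card (link x) _).
apply/subset_leq_card/subsetP => e /[!inE] /andP[eE xe].
have [u ue ubase] := edge_base_vertex eE.
have u_nbr : u \in base_nbr x.
  by rewrite inE ubase; apply/existsP; exists e; rewrite eE xe ue.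
have [lE xl ul] := linkP u_nbr.
have ux : u != x by apply: contraNneq xNbase => <-.
by apply/imsetP; exists u => //; apply: (free_linear ux).
Qed.

Lemma link_avoids v v' x : v \in base -> v' \in base -> v != v' -> v \in base_nbr x ->
  v' \notin link x v.
Proof.
move=> vbase v'base vv' /linkP[lE _ vl]; apply: contraNN vv' => v'l.
by apply/eqP/(edge_part_inj lE vl v'l); move: vbase v'base; rewrite !inE => /eqP-> /eqP->.
Qed.

Lemma link_inj v v' x x' : v \in base -> v' \in base -> v != v' ->
  v \in base_nbr x -> v' \in base_nbr x -> v \in base_nbr x' -> v' \in base_nbr x' ->
  link x v = link x' v -> x = x'.
Proof.
move=> vbase v'base vv' vx v'x vx' v'x' eq_link; apply/eqP/negPn/negP => xx'.
have [aE xa _] := linkP vx; have [_ x'a _] := linkP vx'; rewrite -eq_link in x'a.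
have [bE xb v'b] := linkP v'x; have [b'E x'b' v'b'] := linkP v'x'.
exact: (no_triangle_over_edge aE bE b'E xx' xa x'a (link_avoids vbase v'base vv' vx)).
Qed.

Lemma card_common_base_nbr u w : u \in base -> w \in base -> u != w ->
  #|[set x in ~: base | (u \in base_nbr x) && (w \in base_nbr x)]| <= 2.
Proof.
move=> ubase wbase uw; set S := [set x in ~: base | _].
have memS x : x \in S -> [/\ x \notin base, u \in base_nbr x & w \in base_nbr x].
  by rewrite !inE => /and3P[].
have inj_u : {in S &, injective (link^~ u)}.
  move=> x x' /memS[_ ux wx] /memS[_ ux' wx'].
  exact: (link_inj ubase wbase uw ux wx ux' wx').
have inj_w : {in S &, injective (link^~ w)}.
  move=> x x' /memS[_ ux wx] /memS[_ ux' wx'].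
  by apply: (link_inj wbase ubase _ wx ux wx' ux'); rewrite eq_sym.
rewrite leqNgt; apply/negP => /card_gt2P[x1 [x2 [x3 [[x1S x2S x3S] [x12 x23 x31]]]]].
set xs := [:: x1; x2; x3].
have xs_uniq : uniq xs by rewrite /= !inE !negb_or x12 x23 eq_sym x31.
have xsS : {subset xs <= S} by move=> x; rewrite mem_seq3 => /or3P[] /eqP->.
have [_ ux1 wx1] := memS _ x1S; have [_ ux2 wx2] := memS _ x2S.
have [_ ux3 wx3] := memS _ x3S.
have [a1E x1a1 ua1] := linkP ux1; have [a2E x2a2 ua2] := linkP ux2.
have [a3E x3a3 ua3] := linkP ux3; have [b1E x1b1 wb1] := linkP wx1.
have [b2E x2b2 wb2] := linkP wx2; have [b3E x3b3 wb3] := linkP wx3.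
case: E_free => _ [_]; apply.
apply: (berge_K23 (u := u) (w := w) (x1 := x1) (x2 := x2) (x3 := x3)
  (a1 := link x1 u) (a2 := link x2 u) (a3 := link x3 u)
  (b1 := link x1 w) (b2 := link x2 w) (b3 := link x3 w)) => //.
- rewrite -[_ :: _]/([:: u; w] ++ xs) cat_uniq xs_uniq andbT.
  apply/andP; split; first by rewrite /= inE uw.
  apply/hasPn => x /xsS /memS[xN _ _]; rewrite !inE negb_or.
  by apply/andP; split; apply: contraNneq xN => ->.
- rewrite -[_ :: _]/(map (link^~ u) xs ++ map (link^~ w) xs) cat_uniq.
  rewrite !(map_inj_in_uniq (sub_in2 xsS _)) // xs_uniq andbT.
  apply/hasPn => _ /mapP[x /xsS /memS[_ _ wx] ->].
  apply/mapP => -[x' /xsS /memS[_ ux' _] eq_l].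
  have [_ _ wl] := linkP wx; move: (link_avoids ubase wbase uw ux').
  by rewrite -eq_l wl.
- by rewrite /= a1E a2E a3E b1E b2E b3E.
Qed.

Lemma card_base_nbr_pairs x : #|base_nbr x| * (#|base_nbr x| - 1) =
  \sum_(p in base_pairs) ((p.1 \in base_nbr x) && (p.2 \in base_nbr x)).
Proof.
rewrite -card_distinct_pairs -card_set_sum; apply: eq_card => -[v v'].
rewrite !inE /=; case: (part v == i0); case: (part v' == i0); case: (v != v').
all: by rewrite /= ?andbT ?andbF.
Qed.

Lemma card_base_pairs : #|base_pairs| = n * (n - 1).
Proof. by rewrite -card_base -card_distinct_pairs. Qed.

Lemma sum_deg_pairs_le : \sum_(x in ~: base) deg x * (deg x - 1) <= 2 * (n * (n - 1)).
Proof.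
apply: (@leq_trans (\sum_(x in ~: base) #|base_nbr x| * (#|base_nbr x| - 1))).
  apply: leq_sum => x; rewrite inE => xNbase; have le_deg := deg_le_card_base_nbr xNbase.
  by rewrite leq_mul // leq_sub2r.
under eq_bigr do rewrite card_base_nbr_pairs.
rewrite exchange_big /= -card_base_pairs -sum1_card big_distrr /=.
apply: leq_sum => -[u w]; rewrite inE /= => /and3P[ubase wbase uw].
by rewrite -card_set_sum muln1 card_common_base_nbr.
Qed.

End BasePart.

Lemma card_edges_sqr_le : 0 < r ->
  (r - 1) * #|E| ^ 2 <= 2 * n ^ 3 + (r - 1) * n * #|E|.
Proof.
move=> r_gt0; pose i0 := Ordinal r_gt0.
have cauchy_schwarz := sum_sqr_le_card_mul (~: base i0) deg.
have sum_sqr : \sum_(x in ~: base i0) deg x ^ 2 =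
    \sum_(x in ~: base i0) deg x * (deg x - 1) + \sum_(x in ~: base i0) deg x.
  rewrite -big_split; apply: eq_bigr => x _.
  by case: (deg x) => // d; rewrite subn1 /= -mulnSr mulnn.
move: cauchy_schwarz (sum_deg_pairs_le i0).
rewrite sum_sqr sum_deg_outside_base card_outside_base.
set S := \sum_(x in _) _; set c := r - 1; set m := #|E| => cs S_le.
have [->|c_gt0] := posnP c; first by rewrite !mul0n.
have : c * (c * m ^ 2) <= c * (n * S + c * n * m) by move: cs; rewrite expnMn; nia.
rewrite leq_pmul2l // => /leq_trans; apply; rewrite leq_add2r.
apply: leq_trans (leq_mul (leqnn n) S_le) _; rewrite mulnCA leq_mul2l.
by rewrite /= (expnS n 2) leq_mul2l -mulnn leq_mul2l leq_subr !orbT.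
Qed.

End UpperBound.

Local Open Scope ring_scope.

Lemma le_sqrt_of_sqr_le (R : rcfType) (c m n : nat) : (0 < c)%N ->
  (c * m ^ 2 <= 2 * n ^ 3 + c * n * m)%N ->
  (m%:R : R) <= Num.sqrt (2 / c%:R) * (n%:R * Num.sqrt n%:R) + n%:R.
Proof.
rewrite -(ltr0n R) -(ler_nat R) natrD !natrM.
set C : R := c%:R; set M : R := m%:R; set N : R := n%:R => C_gt0 le_M.
set s := Num.sqrt (2 / C) * (N * Num.sqrt N).
have [M_ge0 N_ge0] : 0 <= M /\ 0 <= N by rewrite !ler0n.
have s_ge0 : 0 <= s by rewrite !mulr_ge0 ?sqrtr_ge0.
have C_s2 : C * (s * s) = 2 * (N * (N * N)).
  rewrite -expr2 !exprMn !sqr_sqrtr ?divr_ge0 ?ler0n //; field.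
  by rewrite lt0r_neq0.
(* If s + n < m then c m^2 = c m (m - n - s) + c s (m - s) + c s^2 + c n m
   exceeds 2 n^3 + c n m. *)
rewrite leNgt; apply/negP => lt_M.
have : 0 < C * (M * (M - N - s)) by do 2 apply: mulr_gt0 => //; lra.
have : 0 <= C * (s * (M - s)) by do 2 apply: mulr_ge0 => //; lra.
nra.
Qed.

Lemma sqr_mean_eq (R : idomainType) (al be ga t0 t1 t2 : R) :
  al + be + ga = 0 -> al * t0 + be * t1 + ga * t2 = 0 ->
  al * t0 ^+ 2 + be * t1 ^+ 2 + ga * t2 ^+ 2 = 0 -> al * be * (t0 - t1) ^+ 2 = 0.
Proof.
move=> /eqP; rewrite addr_eq0 => /eqP e0 /eqP; rewrite addr_eq0 => /eqP e1.
move=> /eqP; rewrite addr_eq0 => /eqP e2.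
transitivity ((al + be) * (al * t0 ^+ 2 + be * t1 ^+ 2) - (al * t0 + be * t1) ^+ 2).
  by ring.
by rewrite e0 e1 e2; ring.
Qed.

Lemma quadratic_le2_roots (R : idomainType) (A B C s1 s2 s3 : R) : A != 0 ->
  A * s1 ^+ 2 + B * s1 + C = 0 -> A * s2 ^+ 2 + B * s2 + C = 0 ->
  A * s3 ^+ 2 + B * s3 + C = 0 -> [|| s1 == s2, s1 == s3 | s2 == s3].
Proof.
move=> A0 r1 r2 r3; apply/negPn/negP; rewrite !negb_or => /and3P[n12 n13 n23].
have sum_roots x y : x != y -> A * x ^+ 2 + B * x + C = 0 -> A * y ^+ 2 + B * y + C = 0 ->
    A * (x + y) + B = 0.
  move=> xy rx ry.
  have : (x - y) * (A * (x + y) + B) = (A * x ^+ 2 + B * x + C) - (A * y ^+ 2 + B * y + C).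
    by ring.
  by rewrite rx ry subrr => /eqP; rewrite mulf_eq0 subr_eq0 (negbTE xy) => /eqP.
have : A * (s3 - s2) = (A * (s1 + s3) + B) - (A * (s1 + s2) + B) by ring.
rewrite !sum_roots // subrr => /eqP; rewrite mulf_eq0 subr_eq0 (negbTE A0) /=.
by rewrite eq_sym (negbTE n23).
Qed.

Section ParabolaAlgebra.
Variable F : fieldType.
Hypothesis two_neq0 : 2 != 0 :> F.

Local Notation point := (F * F)%type.
Local Notation vertex := ('I_3 * (F * F))%type.

Definition shift (c t : F) (x : point) : point := (x.1 + c * t, x.2 + c * t ^+ 2).

Lemma shiftD c c' t x : shift c' t (shift c t x) = shift (c + c') t x.
Proof. by rewrite /shift /=; congr pair; ring. Qed.

Lemma shift_inj c t : injective (shift c t).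
Proof.
apply: (can_inj (g := shift (- c) t)) => x.
by rewrite shiftD addrN /shift !mul0r !addr0; case: x.
Qed.

Lemma shift_eq_pair c s t s' t' x x' : c != 0 -> x != x' ->
  shift c s x = shift c t x' -> shift c s' x = shift c t' x' -> s = s'.
Proof.
case: x x' => [x1 x2] [x1' x2'] c0 xx' [e1 e2] [e1' e2'].
have diff_eq : c * (s - t) = c * (s' - t').
  transitivity (x1' - x1); first by rewrite -[x1'](addrK (c * t)) -e1; ring.
  by rewrite -[x1'](addrK (c * t')) -e1'; ring.
have sqr_diff_eq : c * ((s - t) * (s + t)) = c * ((s' - t') * (s' + t')).
  transitivity (x2' - x2); first by rewrite -[x2'](addrK (c * t ^+ 2)) -e2; ring.
  by rewrite -[x2'](addrK (c * t' ^+ 2)) -e2'; ring.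
have st : s - t = s' - t' := mulfI c0 diff_eq.
have st0 : s - t != 0.
  apply: contraNneq xx' => /eqP; rewrite subr_eq0 => /eqP st0.
  by rewrite st0 in e1 e2; rewrite (addIr _ e1) (addIr _ e2).
have sp : s + t = s' + t' by apply: (mulfI st0); apply: (mulfI c0); rewrite sqr_diff_eq st.
apply: (mulfI two_neq0); transitivity ((s - t) + (s + t)); first ring.
by rewrite st sp; ring.
Qed.

Lemma shift_eq_quadratic c1 c2 s t x x' : shift c1 s x = shift c2 t x' ->
  c1 * (c1 - c2) * s ^+ 2 + 2 * c1 * (x.1 - x'.1) * s
    + ((x.1 - x'.1) ^+ 2 - c2 * (x.2 - x'.2)) = 0.
Proof.
case: x x' => [x1 x2] [x1' x2'] [e1 e2] /=.
have -> : x1 = x1' + c2 * t - c1 * s by rewrite -e1 addrK.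
have -> : x2 = x2' + c2 * t ^+ 2 - c1 * s ^+ 2 by rewrite -e2 addrK.
ring.
Qed.

Definition slope (i : 'I_3) : F := [:: 0; 1; -1]`_i.

Lemma slope_inj : injective slope.
Proof.
have one_neq_opp : (1 : F) != -1.
  by apply: contraNneq two_neq0 => one_opp; rewrite mulr2n {2}one_opp subrr.
move=> [[|[|[|//]]] ?] [[|[|[|//]]] ?] /eqP; rewrite /slope /= => eq_s;
  apply: val_inj => //=; move: eq_s.
all: by rewrite ?(eq_sym 0) ?oppr_eq0 ?oner_eq0 ?(eq_sym (-1)) ?(negbTE one_neq_opp).
Qed.

Lemma slope_sub_neq0 i j : i != j -> slope i - slope j != 0.
Proof. by rewrite subr_eq0; apply: contraNneq => /slope_inj->. Qed.

Definition on_edge (a : point) (t : F) (v : vertex) := v.2 = shift (slope v.1) t a.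
Definition adjacent (v w : vertex) := exists a t, on_edge a t v /\ on_edge a t w.

Lemma on_edge_shift a t v w : on_edge a t v -> on_edge a t w ->
  w.2 = shift (slope w.1 - slope v.1) t v.2.
Proof. by move=> -> ->; rewrite shiftD addrC subrK. Qed.

Lemma on_edge_part_inj a t v w : on_edge a t v -> on_edge a t w -> v.1 = w.1 -> v = w.
Proof. by case: v w => [i x] [j y]; rewrite /on_edge /= => -> -> ->. Qed.

Lemma on_edge_uniq a t a' t' v w : v != w ->
  on_edge a t v -> on_edge a t w -> on_edge a' t' v -> on_edge a' t' w -> a = a' /\ t = t'.
Proof.
move=> vw ev ew ev' ew'.
have vw1 : v.1 != w.1 by apply: contraNneq vw => /(on_edge_part_inj ev ew)->.
have tt' : t = t'.
  have := on_edge_shift ev ew; rewrite (on_edge_shift ev' ew') => -[/addrI /esym + _].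
  by apply: mulfI; rewrite slope_sub_neq0 // eq_sym.
by split=> //; apply: (@shift_inj (slope v.1) t); rewrite -ev tt' -ev'.
Qed.

Lemma on_edge_slope_neq0 a t v w : v != w -> on_edge a t v -> on_edge a t w ->
  slope w.1 - slope v.1 != 0.
Proof.
move=> vw ev ew; apply: slope_sub_neq0.
by apply: contraNneq vw => /esym /(on_edge_part_inj ev ew)->.
Qed.

Lemma on_edge_triangle a0 t0 a1 t1 a2 t2 v0 v1 v2 : v0 != v1 -> v1 != v2 -> v2 != v0 ->
  on_edge a0 t0 v0 -> on_edge a0 t0 v1 -> on_edge a1 t1 v1 -> on_edge a1 t1 v2 ->
  on_edge a2 t2 v2 -> on_edge a2 t2 v0 -> a0 = a1 /\ t0 = t1.
Proof.
move=> n01 n12 n20 e0 e1 e1' e2 e2' e0'.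
set al := slope v1.1 - slope v0.1; set be := slope v2.1 - slope v1.1.
set ga := slope v0.1 - slope v2.1.
have cycle : v0.2 = shift ga t2 (shift be t1 (shift al t0 v0.2)).
  by rewrite -(on_edge_shift e0 e1) -(on_edge_shift e1' e2) -(on_edge_shift e2' e0').
have t01 : t0 = t1.
  move: cycle; case: (v0.2) => x y [ex ey].
  have : al * be * (t0 - t1) ^+ 2 = 0.
    apply: (sqr_mean_eq (ga := ga) (t2 := t2)); first by rewrite /al /be /ga; ring.
      by apply: (addrI x); rewrite addr0 [RHS]ex; ring.
    by apply: (addrI y); rewrite addr0 [RHS]ey; ring.
  have al0 : al != 0 := on_edge_slope_neq0 n01 e0 e1.
  have be0 : be != 0 := on_edge_slope_neq0 n12 e1' e2.
  move/eqP; rewrite mulf_eq0 expf_eq0 mulf_eq0 (negbTE al0) (negbTE be0).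
  by rewrite subr_eq0 => /eqP.
by split=> //; apply: (@shift_inj (slope v1.1) t0); rewrite -e1 t01 -e1'.
Qed.

Lemma adjacent_shift v w : adjacent v w ->
  exists t, w.2 = shift (slope w.1 - slope v.1) t v.2.
Proof. by case=> a [t [ev ew]]; exists t; apply: on_edge_shift ev ew. Qed.

Lemma common_nbr_same_part u1 u2 y y' : u1 != u2 -> u1.1 = u2.1 -> y'.1 = y.1 ->
  y.1 != u1.1 -> adjacent u1 y -> adjacent u2 y -> adjacent u1 y' -> adjacent u2 y' ->
  y = y'.
Proof.
move=> u12 p12 pyy' py1 /adjacent_shift[s ys] /adjacent_shift[t yt].
move=> /adjacent_shift[s' ys'] /adjacent_shift[t' yt'].
rewrite -p12 in yt yt'; rewrite pyy' in ys' yt'.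
have u12' : u1.2 != u2.2.
  by apply: contraNneq u12; case: u1 u2 p12 {ys yt ys' yt' py1} => [? ?] [? ?] /= -> ->.
have ss' := shift_eq_pair (slope_sub_neq0 py1) u12'
  (etrans (esym ys) yt) (etrans (esym ys') yt').
by case: y y' pyy' ys ys' {yt yt' py1} => [i x] [j x'] /= -> -> ->; rewrite ss'.
Qed.

Lemma common_nbrs_other_part u1 u2 y0 y1 y2 : u1.1 != u2.1 ->
  y0.1 != u1.1 -> y0.1 != u2.1 -> y1.1 = y0.1 -> y2.1 = y0.1 ->
  adjacent u1 y0 -> adjacent u2 y0 -> adjacent u1 y1 -> adjacent u2 y1 ->
  adjacent u1 y2 -> adjacent u2 y2 -> [|| y0 == y1, y0 == y2 | y1 == y2].
Proof.
move=> p12 p01 p02 e1 e2 a0 b0 a1 b1 a2 b2.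
set c1 := slope y0.1 - slope u1.1; set c2 := slope y0.1 - slope u2.1.
set d1 := u1.2.1 - u2.2.1; set d2 := u1.2.2 - u2.2.2.
have root y : y.1 = y0.1 -> adjacent u1 y -> adjacent u2 y ->
    exists2 s, y.2 = shift c1 s u1.2 &
      c1 * (c1 - c2) * s ^+ 2 + 2 * c1 * d1 * s + (d1 ^+ 2 - c2 * d2) = 0.
  move=> yk /adjacent_shift[s ys] /adjacent_shift[t yt]; rewrite yk in ys yt.
  by exists s => //; apply: (shift_eq_quadratic (t := t)); rewrite -ys -yt.
have [s0 ys0 r0] := root y0 erefl a0 b0; have [s1 ys1 r1] := root y1 e1 a1 b1.
have [s2 ys2 r2] := root y2 e2 a2 b2.
have A0 : c1 * (c1 - c2) != 0.
  rewrite mulf_neq0 ?slope_sub_neq0 // (_ : c1 - c2 = slope u2.1 - slope u1.1).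
    by rewrite slope_sub_neq0 // eq_sym.
  by rewrite /c1 /c2; ring.
have same (y y' : vertex) s s' : y'.1 = y.1 ->
    y.2 = shift c1 s u1.2 -> y'.2 = shift c1 s' u1.2 -> s == s' -> y == y'.
  by case: y y' => [i x] [j x'] /= -> -> -> /eqP->.
case/or3P: (quadratic_le2_roots A0 r0 r1 r2) => eq_s.
- by rewrite (same y0 y1 s0 s1 e1 ys0 ys1 eq_s).
- by rewrite (same y0 y2 s0 s2 e2 ys0 ys2 eq_s) orbT.
- by rewrite (same y1 y2 s1 s2 (etrans e2 (esym e1)) ys1 ys2 eq_s) !orbT.
Qed.

End ParabolaAlgebra.
Arguments slope {F} i.

Lemma ord3_avoid1 (i a b c : 'I_3) : a != i -> b != i -> c != i ->
  [|| a == b, a == c | b == c].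
Proof.
by move: i a b c => [i ?] [a ?] [b ?] [c ?]; rewrite -!val_eqE /=; lia.
Qed.

Lemma ord3_avoid2 (i j a b : 'I_3) :
  i != j -> a != i -> a != j -> b != i -> b != j -> a = b.
Proof.
move: i j a b => [i ?] [j ?] [a ?] [b ?]; rewrite -!val_eqE /= => *.
by apply: val_inj => /=; lia.
Qed.

Section ParabolaHypergraph.
Variable F : finFieldType.
Hypothesis two_neq0 : 2 != 0 :> F.

Local Notation point := (F * F)%type.
Local Notation vertex := ('I_3 * (F * F))%type.

Definition parabola_edge (a : point) (t : F) : {set vertex} :=
  [set (i, shift (slope i) t a) | i : 'I_3].

Definition all_parabola_edges : {set {set vertex}} :=
  [set parabola_edge p.1 p.2 | p : point * F].

Lemma parabola_edgeP a t v : reflect (on_edge a t v) (v \in parabola_edge a t).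
Proof.
apply: (iffP imsetP) => [[i _ ->] // | ev].
by exists v.1 => //; case: v ev => i x; rewrite /on_edge /= => ->.
Qed.

Lemma all_parabola_edgesP e v w : [/\ e \in all_parabola_edges, v \in e & w \in e] ->
  exists a t, [/\ e = parabola_edge a t, on_edge a t v & on_edge a t w].
Proof.
by case=> /imsetP[[a t] _ ->] /parabola_edgeP ev /parabola_edgeP ew; exists a, t.
Qed.

Lemma all_parabola_edges_C2_free : ~ berge_contains C2_ends all_parabola_edges.
Proof.
case=> phi [f [phi_inj [f_inj f_ok]]].
have [a [t [fa ua va]]] := all_parabola_edgesP (f_ok ord0).
have [a' [t' [fa' ua' va']]] := all_parabola_edgesP (f_ok ord_max).
have uv : phi ord0 != phi ord_max by rewrite (inj_eq phi_inj).
have [eq_a eq_t] := on_edge_uniq two_neq0 uv ua va ua' va'.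
by have /f_inj := etrans fa (etrans (congr2 parabola_edge eq_a eq_t) (esym fa')).
Qed.

Lemma all_parabola_edges_C3_free : ~ berge_contains C3_ends all_parabola_edges.
Proof.
case=> phi [f [phi_inj [f_inj f_ok]]].
pose g (k : nat) : 'I_3 := inord k.
have ends_g k : (k < 3)%N -> C3_ends (g k) = (g k, g (k.+1 %% 3)%N).
  by move=> k3; rewrite /C3_ends /g inordK // addn1.
have [a0 [t0 [f0 v0 v1]]] := all_parabola_edgesP (f_ok (g 0)).
have [a1 [t1 [f1 v1' v2]]] := all_parabola_edgesP (f_ok (g 1)).
have [a2 [t2 [f2 v2' v0']]] := all_parabola_edgesP (f_ok (g 2)).
rewrite !ends_g //= in v0 v1 v1' v2 v2' v0'.
have phi_g k k' : (k < 3)%N -> (k' < 3)%N -> k != k' -> phi (g k) != phi (g k').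
  by move=> *; rewrite (inj_eq phi_inj) -val_eqE /= !inordK.
have [eq_a eq_t] := on_edge_triangle two_neq0
  (phi_g 0 1 isT isT isT) (phi_g 1 2 isT isT isT) (phi_g 2 0 isT isT isT)
  v0 v1 v1' v2 v2' v0'.
have /f_inj /(congr1 val) := etrans f0 (etrans (congr2 parabola_edge eq_a eq_t) (esym f1)).
by rewrite /= !inordK.
Qed.

Lemma all_parabola_edges_K23_free : ~ berge_contains K23_ends all_parabola_edges.
Proof.
case=> phi [f [phi_inj [f_inj f_ok]]].
pose u i := phi (inl i); pose w j := phi (inr j).
have adj i j : adjacent (u i) (w j).
  by have [a [t [_ ui wj]]] := all_parabola_edgesP (f_ok (i, j)); exists a, t.
have w_part i j : (w j).1 != (u i).1.
  have [a [t [_ ui wj]]] := all_parabola_edgesP (f_ok (i, j)).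
  rewrite /K23_ends /= in ui wj.
  have : w j != u i by rewrite (inj_eq phi_inj).
  by apply: contraNneq => /(on_edge_part_inj wj ui) /eqP.
have w_neq j j' : j != j' -> w j != w j' by rewrite (inj_eq phi_inj).
have u12 : u ord0 != u ord_max by rewrite (inj_eq phi_inj).
pose j0 : 'I_3 := ord0; pose j1 : 'I_3 := Ordinal (isT : 1 < 3)%N.
pose j2 : 'I_3 := ord_max.
have [p12 | p12] := eqVneq (u ord0).1 (u ord_max).1.
- have w_part_neq j j' : j != j' -> (w j).1 != (w j').1.
    move=> jj'; apply: contraNneq (w_neq _ _ jj') => pj; apply/eqP.
    exact: (common_nbr_same_part two_neq0 u12 p12 (esym pj) (w_part _ _)).
  by case/or3P: (ord3_avoid1 (w_part ord0 j0) (w_part ord0 j1) (w_part ord0 j2));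
    apply/negP; apply: w_part_neq.
- have same_part j : (w j).1 = (w j0).1.
    exact: (ord3_avoid2 p12 (w_part _ _) (w_part _ _) (w_part _ _) (w_part _ _)).
  have := common_nbrs_other_part two_neq0 p12 (w_part _ _) (w_part _ _)
    (same_part j1) (same_part j2)
    (adj _ _) (adj _ _) (adj _ _) (adj _ _) (adj _ _) (adj _ _).
  by rewrite /w !(inj_eq phi_inj).
Qed.

(* Excluding t = 0 only fixes the edge count: [all_parabola_edges] is already free. *)
Definition parabola_hypergraph : {set {set vertex}} :=
  [set parabola_edge p.1 p.2 | p in [set p : point * F | p.2 != 0]].

Lemma parabola_edge_inj a t a' t' :
  parabola_edge a t = parabola_edge a' t' -> a = a' /\ t = t'.
Proof.
move=> eq_e; pose v i : vertex := (i, shift (slope i) t a).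
have v_in' i : v i \in parabola_edge a' t' by rewrite -eq_e; apply: imset_f.
have v01 : v ord0 != v ord_max by [].
apply: (on_edge_uniq two_neq0 v01); apply/parabola_edgeP; rewrite ?v_in' //.
all: exact: imset_f.
Qed.

Lemma card_parabola_edge a t : #|parabola_edge a t| = 3.
Proof. by rewrite card_imset ?card_ord // => i j []. Qed.

Lemma card_parabola_hypergraph : #|parabola_hypergraph| = (#|F| ^ 2 * (#|F| - 1))%N.
Proof.
rewrite card_in_imset; last by move=> [a t] [a' t'] _ _ /parabola_edge_inj /= [-> ->].
have -> : [set p : point * F | p.2 != 0] = setX [set: point] [set~ 0].
  by apply/setP => -[a t]; rewrite !inE.
by rewrite cardsX cardsT card_prod cardsC1 mulnn subn1.
Qed.

Lemma parabola_hypergraph_uniform : uniform 3 parabola_hypergraph.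
Proof. by move=> _ /imsetP[p _ ->]; apply: card_parabola_edge. Qed.

Lemma parabola_hypergraph_partite : partite fst (#|F| ^ 2) parabola_hypergraph.
Proof.
split=> [i | _ /imsetP[[a t] _ ->] i].
  have -> : [set v : vertex | v.1 == i] = setX [set i] [set: point].
    by apply/setP => -[j x]; rewrite !inE andbT.
  by rewrite cardsX cards1 cardsT card_prod mulnn mul1n.
apply/eqP/cards1P; exists (i, shift (slope i) t a); apply/setP => -[j x].
rewrite !inE xpair_eqE /=; case: eqP => [-> | _]; last by rewrite andbF.
by rewrite andbT; apply/parabola_edgeP/eqP.
Qed.

Lemma parabola_hypergraph_free : C2_C3_K23_free parabola_hypergraph.
Proof.
have sub : parabola_hypergraph \subset all_parabola_edges.
  by apply/subsetP => _ /imsetP[p _ ->]; apply/imsetP; exists p.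
split; [|split] => /(berge_containsS sub).
- exact: all_parabola_edges_C2_free.
- exact: all_parabola_edges_C3_free.
- exact: all_parabola_edges_K23_free.
Qed.

End ParabolaHypergraph.

Lemma parabola_construction (F : finFieldType) : 2 != 0 :> F ->
  exists E : {set {set 'I_3 * 'I_(#|F| ^ 2)}},
    [/\ uniform 3 E, partite (fun v : 'I_3 * 'I_(#|F| ^ 2) => v.1) (#|F| ^ 2) E,
        C2_C3_K23_free E & #|E| = (#|F| ^ 2 * (#|F| - 1))%N].
Proof.
move=> two_neq0.
have cardFF : #|{: F * F}| = (#|F| ^ 2)%N by rewrite card_prod mulnn.
pose h (v : 'I_3 * (F * F)) := (v.1, cast_ord cardFF (enum_rank v.2)).
have h_bij : bijective h.
  exists (fun v => (v.1, enum_val (cast_ord (esym cardFF) v.2))) => -[i x] /=.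
    by rewrite cast_ordK enum_rankK.
  by rewrite /h /= enum_valK cast_ordKV.
exists (relabel h (parabola_hypergraph F)); split.
- exact/(uniform_relabel h_bij)/parabola_hypergraph_uniform.
- exact/(partite_relabel h_bij (fun=> erefl))/parabola_hypergraph_partite.
- exact/(C2_C3_K23_free_relabel h_bij)/parabola_hypergraph_free.
- by rewrite (card_relabel h_bij) card_parabola_hypergraph.
Qed.

Lemma odd_prime_power_field (q p k : nat) :
  prime p -> odd p -> (0 < k)%N -> q = (p ^ k)%N ->
  exists2 F : finFieldType, #|F| = q & 2 != 0 :> F.
Proof.
move=> p_prime p_odd k_gt0 ->; have [F pF cardF] := pPrimePowerField p_prime k_gt0.
exists F => //; rewrite -(dvdn_pcharf pF).
apply: contraL p_odd => /(dvdn_leq (isT : 0 < 2)%N).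
by rewrite leq_eqVlt ltnS leqNgt prime_gt1 // orbF => /eqP->.
Qed.

Theorem theorem1p3 :
  (forall (R : rcfType) (r n : nat) (V : finType) (part : V -> 'I_r)
          (E : {set {set V}}),
      (3 <= r)%N -> uniform r E -> partite part n E -> C2_C3_K23_free E ->
      (#|E|%:R : R) <=
        Num.sqrt (2 / (r - 1)%:R) * (n%:R * Num.sqrt n%:R) + n%:R)
  /\
  (forall (q p k : nat), prime p -> odd p -> (0 < k)%N -> q = (p ^ k)%N ->
     exists E : {set {set ('I_3 * 'I_(q ^ 2))%type}},
       [/\ uniform 3 E, partite (fun v : 'I_3 * 'I_(q ^ 2) => v.1) (q ^ 2) E,
           C2_C3_K23_free E & #|E| = (q ^ 2 * (q - 1))%N]).
Proof.
split.
- move=> R r n V part E r_ge3 E_uniform E_partite E_free.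
  have r_gt1 : (1 < r)%N by apply: leq_trans r_ge3.
  apply: le_sqrt_of_sqr_le; first by rewrite subn_gt0.
  exact: card_edges_sqr_le E_uniform E_partite E_free (ltnW r_gt1).
- move=> q p k p_prime p_odd k_gt0 q_def.
  have [F <- two_neq0] := odd_prime_power_field p_prime p_odd k_gt0 q_def.
  exact: parabola_construction.
Qed.
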